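(* Let $A_1, C_2\in\mathbb{R}^{n\times m}$ and fix a position $(r,c)$ with $r\in\{1,\dots,n\}$, $c\in\{1,\dots,m\}$. For $j\neq c$ let $d_{rj}=C_2(r,\max(j,c))-C_2(r,\min(j,c))$ denote the pairwise difference in row $r$ of $C_2$ between columns $j$ and $c$. If $d_{rj}<0$ for all $j<c$ and $d_{rj}>0$ for all $j>c$, then the optimization problem $$\min_{E,\phi\in\mathbb{R}^{n\times m}:\ \phi(r,c)=0}\ \|E\|_F^2$$ subject to, for all rows $\gamma,\bar\gamma$ and columns $\sigma,\bar\sigma$: $A_1(\gamma,\sigma)+E(\gamma,\sigma)-A_1(\bar\gamma,\sigma)-E(\bar\gamma,\sigma)=\phi(\gamma,\sigma)-\phi(\bar\gamma,\sigma)$, $C_2(\gamma,\sigma)-C_2(\gamma,\bar\sigma)=\phi(\gamma,\sigma)-\phi(\gamma,\bar\sigma)$, $\phi(\gamma,\sigma)>0$ for all $(\gamma,\sigma)\ne(r,c)$, produces a finite matrix $E$, i.e. there exist real matrices $E,\phi$ satisfying all the constraints, so that $\phi$ is an exact potential for the bimatrix game $(A_1+E,\,C_2)$ with unique global minimum at $(r,c)$.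
   Context: Matrices are indexed by rows (player 1's actions) and columns (player 2's actions); both players are minimizers. $\|\cdot\|_F$ is the Frobenius norm. A matrix $\phi$ is an exact potential for the bimatrix game $(X,Y)$ if $X(\gamma,\sigma)-X(\bar\gamma,\sigma)=\phi(\gamma,\sigma)-\phi(\bar\gamma,\sigma)$ and $Y(\gamma,\sigma)-Y(\gamma,\bar\sigma)=\phi(\gamma,\sigma)-\phi(\gamma,\bar\sigma)$ for all $\gamma,\bar\gamma,\sigma,\bar\sigma$. *)

From HB Require Import structures.
From mathcomp Require Import all_boot all_order all_algebra.
From mathcomp Require Import reals.
Set Implicit Arguments. Unset Strict Implicit. Unset Printing Implicit Defensive.
Import Order.TTheory GRing.Theory Num.Theory.
Local Open Scope ring_scope.

Definition pairdiff (R : realType) (n m : nat) (C2 : 'M[R]_(n, m))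
    (r : 'I_n) (c j : 'I_m) : R :=
  if (j < c)%N then C2 r c - C2 r j else C2 r j - C2 r c.

Definition exact_potential (R : realType) (n m : nat)
    (X Y phi : 'M[R]_(n, m)) : Prop :=
  (forall (g g' : 'I_n) (s : 'I_m), X g s - X g' s = phi g s - phi g' s) /\
  (forall (g : 'I_n) (s s' : 'I_m), Y g s - Y g s' = phi g s - phi g s').

(* Taking E := phi - A1 makes the first-player condition hold for any phi,
   so it suffices to find a potential phi for C2 alone.  Shifting every row
   of C2 by a constant keeps all differences within a row; shift row r by
   -C2(r,c), which vanishes at (r,c) and is positive elsewhere on row r since
   the sign conditions make (r,c) the strict minimum of that row, and shift
   every other row by 1 + sum_k |C2(g,k)|, which exceeds -C2(g,s). *)

From HB Require Import structures.
From mathcomp Require Import all_boot all_order all_algebra.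
From mathcomp Require Import reals.
From mathcomp Require Import ring lra.
Import Order.TTheory GRing.Theory Num.Theory.
Local Open Scope ring_scope.

Lemma oppr_lt_sum_norm1 {R : realType} {I : finType} (f : I -> R) (i : I) :
  - f i < 1 + \sum_k `|f k|.
Proof.
have norm_le_sum : `|f i| <= \sum_k `|f k|.
  by rewrite (bigD1 i) //= lerDl sumr_ge0.
have := ler_norm (- f i); rewrite normrN; lra.
Qed.

Section RowShiftPotential.

Context {R : realType} {n m : nat}.

Lemma pairdiff_signs_row_min (C2 : 'M[R]_(n, m)) (r : 'I_n) (c : 'I_m) :
  (forall j : 'I_m, (j < c)%N -> pairdiff C2 r c j < 0) ->
  (forall j : 'I_m, (c < j)%N -> pairdiff C2 r c j > 0) ->
  forall j : 'I_m, j != c -> C2 r c < C2 r j.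
Proof.
move=> lt_c gt_c j; rewrite neq_ltn => /orP[jc | cj].
- by have := lt_c _ jc; rewrite /pairdiff jc; lra.
- by have := gt_c _ cj; rewrite /pairdiff ltnNge (ltnW cj) /=; lra.
Qed.

Definition row_shift (Y : 'M[R]_(n, m)) (h : 'I_n -> R) : 'M[R]_(n, m) :=
  \matrix_(g, s) (Y g s + h g).

Lemma row_shift_col_diff (Y : 'M[R]_(n, m)) (h : 'I_n -> R) g s s' :
  Y g s - Y g s' = row_shift Y h g s - row_shift Y h g s'.
Proof. by rewrite !mxE; ring. Qed.

Lemma exact_potential_completion (X Y phi : 'M[R]_(n, m)) :
  (forall g s s', Y g s - Y g s' = phi g s - phi g s') ->
  exact_potential (X + (phi - X)) Y phi.
Proof. by move=> Yphi; split=> // g g' s; rewrite !mxE; ring. Qed.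

Definition min_potential (Y : 'M[R]_(n, m)) (r : 'I_n) (c : 'I_m) :=
  row_shift Y (fun g => if g == r then - Y r c else 1 + \sum_k `|Y g k|).

Lemma min_potential_at (Y : 'M[R]_(n, m)) r c : min_potential Y r c r c = 0.
Proof. by rewrite mxE eqxx subrr. Qed.

Lemma min_potential_gt0 (Y : 'M[R]_(n, m)) r c :
  (forall j, j != c -> Y r c < Y r j) ->
  forall g s, (g, s) != (r, c) -> 0 < min_potential Y r c g s.
Proof.
move=> row_min g s; rewrite mxE; have [->|_] := eqVneq g r.
  by rewrite xpair_eqE eqxx /= subr_gt0; exact: row_min.
by have := oppr_lt_sum_norm1 (Y g) s; lra.
Qed.

End RowShiftPotential.

Theorem theorem2 (R : realType) (n m : nat) (A1 C2 : 'M[R]_(n, m))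
    (r : 'I_n) (c : 'I_m) :
  (forall j : 'I_m, (j < c)%N -> pairdiff C2 r c j < 0) ->
  (forall j : 'I_m, (c < j)%N -> pairdiff C2 r c j > 0) ->
  exists E phi : 'M[R]_(n, m),
    phi r c = 0 /\
    (forall (g g' : 'I_n) (s : 'I_m),
        A1 g s + E g s - A1 g' s - E g' s = phi g s - phi g' s) /\
    (forall (g : 'I_n) (s s' : 'I_m),
        C2 g s - C2 g s' = phi g s - phi g s') /\
    (forall (g : 'I_n) (s : 'I_m), (g, s) != (r, c) -> 0 < phi g s) /\
    exact_potential (A1 + E) C2 phi.
Proof.
move=> lt_c gt_c; set phi := min_potential C2 r c.
have C2phi : forall g s s', C2 g s - C2 g s' = phi g s - phi g s'.
  exact: row_shift_col_diff.
have pot := exact_potential_completion A1 C2 phi C2phi.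
exists (phi - A1), phi; split; first exact: min_potential_at.
split.
  by move=> g g' s; rewrite -pot.1 !mxE; ring.
split; first exact: C2phi.
split; last exact: pot.
exact/min_potential_gt0/pairdiff_signs_row_min.
Qed.
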